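(* Let $\phi: M_n\to M_n$ be a unital PPT map with $\phi\circ\phi=\phi$. Then $\phi$ is entanglement breaking.
   Context: $M_n$ denotes the $n\times n$ complex matrices. A linear map is completely positive (CP) if $\phi\otimes \mathrm{id}_k$ is positive for all $k$. A CP map $\phi: M_n\to M_n$ is PPT if $T\circ\phi$ is CP, where $T$ is the transpose map on $M_n$. A map $\phi: M_p\to M_q$ is entanglement breaking if it can be written as $\phi(X)=\sum_k v_k w_k^* X w_k v_k^*$ for finitely many vectors $w_k\in\mathbb{C}^p$, $v_k\in\mathbb{C}^q$. *)

From HB Require Import structures.
From mathcomp Require Import all_boot all_order all_algebra.
From mathcomp Require Import complex.
From mathcomp Require Import reals.
Set Implicit Arguments. Unset Strict Implicit. Unset Printing Implicit Defensive.
Import Order.TTheory GRing.Theory Num.Theory.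
Local Open Scope ring_scope.

Definition adjmx {C : numClosedFieldType} {m n : nat} (A : 'M[C]_(m, n)) : 'M[C]_(n, m) :=
  (map_mx Num.conj A)^T.

Definition psdmx {C : numClosedFieldType} {m : nat} (A : 'M[C]_m) : Prop :=
  adjmx A = A /\ forall x : 'cV[C]_m, 0 <= (adjmx x *m A *m x) 0 0.

Definition blockmx {C : numClosedFieldType} {n k : nat} (X : 'I_k -> 'I_k -> 'M[C]_n) :=
  @mxblock C k k (fun _ => n) (fun _ => n) X.

Definition positive_map {C : numClosedFieldType} {n m : nat} (phi : 'M[C]_n -> 'M[C]_m) : Prop :=
  forall A : 'M[C]_n, psdmx A -> psdmx (phi A).

(* id_k (x) phi positive for every k *)
Definition completely_positive {C : numClosedFieldType} {n m : nat}
  (phi : 'M[C]_n -> 'M[C]_m) : Prop :=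
  forall (k : nat) (X : 'I_k -> 'I_k -> 'M[C]_n),
    psdmx (blockmx X) -> psdmx (blockmx (fun i j => phi (X i j))).

Definition PPT {C : numClosedFieldType} {n : nat} (phi : 'M[C]_n -> 'M[C]_n) : Prop :=
  completely_positive phi /\ completely_positive (fun X => (phi X)^T).

Definition entanglement_breaking {C : numClosedFieldType} {p q : nat}
  (phi : 'M[C]_p -> 'M[C]_q) : Prop :=
  exists s : seq ('cV[C]_q * 'cV[C]_p),
    forall X : 'M[C]_p,
      phi X = \sum_(t <- s) (t.1 *m adjmx t.2 *m X *m t.2 *m adjmx t.1).

From HB Require Import structures.
From mathcomp Require Import all_boot all_order all_algebra.
From mathcomp Require Import complex.
From mathcomp Require Import reals.
From mathcomp Require Import ring zify.
From Stdlib Require Import Classical.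
Set Implicit Arguments. Unset Strict Implicit. Unset Printing Implicit Defensive.
Import Order.TTheory GRing.Theory Num.Theory.
Local Open Scope ring_scope.

(* Kadison-Schwarz for the unital CP maps [phi] and [T o phi] gives
   [phi (x^* x) = phi (x x^* )] on the range of [phi]; polarizing, the range is a
   commutative algebra for the Choi-Effros product [x o y := phi (x y)], on
   which [phi] is a faithful conditional expectation
   ([phi (a b) = phi (a phi b)] for [a] in the range).  Its multiplication
   operators thus commute and, the algebra having no nilpotents, are
   simultaneously diagonalizable.  The components of [1] in the common
   eigenspaces are minimal idempotents [e_s] of the range; they are positive
   matrices and [phi X = sum_s chi_s (phi X) e_s] with positive functionals
   [chi_s o phi].  Expanding the [e_s] and these functionals into rank-one
   terms yields the entanglement-breaking form. *)

Section Adjoint.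
Variable C : numClosedFieldType.

Lemma adjmxK m n (A : 'M[C]_(m, n)) : adjmx (adjmx A) = A.
Proof. by apply/matrixP=> i j; rewrite !mxE conjCK. Qed.

Lemma adjmxM m n p (A : 'M[C]_(m, n)) (B : 'M_(n, p)) :
  adjmx (A *m B) = adjmx B *m adjmx A.
Proof.
apply/matrixP=> i j; rewrite !mxE rmorph_sum; apply: eq_bigr => k _.
by rewrite !mxE rmorphM mulrC.
Qed.

Lemma adjmxD m n (A B : 'M[C]_(m, n)) : adjmx (A + B) = adjmx A + adjmx B.
Proof. by apply/matrixP=> i j; rewrite !mxE rmorphD. Qed.

Lemma adjmxN m n (A : 'M[C]_(m, n)) : adjmx (- A) = - adjmx A.
Proof. by apply/matrixP=> i j; rewrite !mxE rmorphN. Qed.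

Lemma adjmxZ m n (c : C) (A : 'M[C]_(m, n)) : adjmx (c *: A) = c^* *: adjmx A.
Proof. by apply/matrixP=> i j; rewrite !mxE rmorphM. Qed.

Lemma adjmx0 m n : adjmx (0 : 'M[C]_(m, n)) = 0.
Proof. by apply/matrixP=> i j; rewrite !mxE rmorph0. Qed.

Lemma adjmx1 n : adjmx (1%:M : 'M[C]_n) = 1%:M.
Proof. by apply/matrixP=> i j; rewrite !mxE eq_sym rmorph_nat. Qed.

Lemma adjmx_trmx m n (A : 'M[C]_(m, n)) : adjmx A^T = (adjmx A)^T.
Proof. by apply/matrixP=> i j; rewrite !mxE. Qed.

Lemma map_conj_trmx m n (A : 'M[C]_(m, n)) : map_mx Num.conj A^T = adjmx A.
Proof. by apply/matrixP=> i j; rewrite !mxE. Qed.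

Lemma adjmx_diag n (d : 'rV[C]_n) : adjmx (diag_mx d) = diag_mx (map_mx Num.conj d).
Proof.
apply/matrixP=> i j; rewrite !mxE eq_sym.
by case: eqP => [->|_]; rewrite ?mulr1n ?mulr0n ?rmorph0.
Qed.

Lemma adjmx_delta n (i : 'I_n) : adjmx (delta_mx i 0 : 'cV[C]_n) = delta_mx 0 i.
Proof. by apply/matrixP=> a b; rewrite !mxE rmorph_nat andbC. Qed.

Lemma adjmx_mxrow k m n (Z : 'I_k -> 'M[C]_(m, n)) :
  adjmx (\mxrow_j Z j) = \mxcol_j adjmx (Z j).
Proof. by apply/matrixP=> i j; rewrite !mxE. Qed.

Lemma adjmx_mxcol k m n (Z : 'I_k -> 'M[C]_(n, m)) :
  adjmx (\mxcol_j Z j) = \mxrow_j adjmx (Z j).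
Proof. by apply/matrixP=> i j; rewrite !mxE. Qed.

Lemma adjmx_blockmx k n (Y : 'I_k -> 'I_k -> 'M[C]_n) :
  adjmx (blockmx Y) = blockmx (fun i j => adjmx (Y j i)).
Proof. by apply/matrixP=> i j; rewrite !mxE. Qed.

End Adjoint.

Lemma conj_comb_eq0 (C : numClosedFieldType) (W : lmodType C) (a b : W) :
  (forall c : C, c *: a + c^* *: b = 0) -> a = 0.
Proof.
move=> H; have := H 'i; have := H 1; rewrite conjCi rmorph1 !scale1r.
move/eqP; rewrite addr_eq0 => /eqP ->; rewrite scalerN scaleNr -opprD.
move/eqP; rewrite oppr_eq0 -mulr2n -scaler_nat scalerA scaler_eq0 mulf_eq0.
by rewrite pnatr_eq0 (negbTE (neq0Ci C)) /= => /eqP ->; rewrite oppr0.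
Qed.

Section Psd.
Variable C : numClosedFieldType.

Definition mxform n (K : 'M[C]_n) (x y : 'cV[C]_n) := (adjmx x *m K *m y) 0 0.

Lemma mxformDl n (K : 'M[C]_n) x y z : mxform K (x + y) z = mxform K x z + mxform K y z.
Proof. by rewrite /mxform adjmxD !mulmxDl mxE. Qed.

Lemma mxformDr n (K : 'M[C]_n) x y z : mxform K x (y + z) = mxform K x y + mxform K x z.
Proof. by rewrite /mxform mulmxDr mxE. Qed.

Lemma mxformZl n (K : 'M[C]_n) c x y : mxform K (c *: x) y = c^* * mxform K x y.
Proof. by rewrite /mxform adjmxZ -!scalemxAl mxE. Qed.

Lemma mxformZr n (K : 'M[C]_n) c x y : mxform K x (c *: y) = c * mxform K x y.
Proof. by rewrite /mxform -!scalemxAr mxE. Qed.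

Lemma mxform_add n (K L : 'M[C]_n) x y :
  mxform (K + L) x y = mxform K x y + mxform L x y.
Proof. by rewrite /mxform mulmxDr mulmxDl mxE. Qed.

Lemma mxform_opp n (K : 'M[C]_n) x y : mxform (- K) x y = - mxform K x y.
Proof. by rewrite /mxform mulmxN mulNmx mxE. Qed.

Lemma mxform_sub n (K L : 'M[C]_n) x y :
  mxform (K - L) x y = mxform K x y - mxform L x y.
Proof. by rewrite mxform_add mxform_opp. Qed.

Lemma mxform_scale n (K : 'M[C]_n) c x y : mxform (c *: K) x y = c * mxform K x y.
Proof. by rewrite /mxform -scalemxAr -scalemxAl mxE. Qed.

Lemma mxform_adj n (K : 'M[C]_n) x y : mxform (adjmx K) x y = (mxform K y x)^*.
Proof.
have adj11 (M : 'M[C]_1) : (M 0 0)^* = adjmx M 0 0 by rewrite !mxE.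
by rewrite /mxform adj11 !adjmxM adjmxK mulmxA.
Qed.

Lemma mxform_delta n (K : 'M[C]_n) i j : mxform K (delta_mx i 0) (delta_mx j 0) = K i j.
Proof. by rewrite /mxform adjmx_delta -rowE -colE !mxE. Qed.

Lemma mxform_eq0 n (K : 'M[C]_n) : (forall x, mxform K x x = 0) -> K = 0.
Proof.
move=> K0; apply/matrixP => i j; rewrite mxE -mxform_delta.
set u := delta_mx i 0; set v := delta_mx j 0.
apply: (@conj_comb_eq0 _ C^o _ (mxform K v u)) => c.
have := K0 (u + c *: v).
by rewrite !(mxformDl, mxformDr, mxformZl, mxformZr) !K0 mulr0 addr0 add0r.
Qed.

Lemma gram_ge0 m (y : 'cV[C]_m) : 0 <= (adjmx y *m y) 0 0.
Proof.
rewrite mxE; apply: sumr_ge0 => i _.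
by rewrite !mxE mulrC mul_conjC_ge0.
Qed.

Lemma psdP n (A : 'M[C]_n) : psdmx A <-> forall x, 0 <= mxform A x x.
Proof.
split=> [[]|A_ge0] //; split=> //; apply/eqP; rewrite -subr_eq0; apply/eqP.
by apply: mxform_eq0 => x; rewrite mxform_sub mxform_adj geC0_conj // subrr.
Qed.

Lemma psdmxD n (A B : 'M[C]_n) : psdmx A -> psdmx B -> psdmx (A + B).
Proof.
by move=> /psdP A_ge0 /psdP B_ge0; apply/psdP => x; rewrite mxform_add addr_ge0.
Qed.

Lemma psdmx_gram m n (S : 'M[C]_(m, n)) : psdmx (adjmx S *m S).
Proof. by apply/psdP => x; rewrite /mxform mulmxA -adjmxM -mulmxA gram_ge0. Qed.

Lemma psdmx_congr m n (A : 'M[C]_m) (S : 'M[C]_(m, n)) :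
  psdmx A -> psdmx (adjmx S *m A *m S).
Proof.
move=> /psdP A_ge0; apply/psdP => x.
by have := A_ge0 (S *m x); rewrite /mxform adjmxM !mulmxA.
Qed.

Lemma psdmx_trmx n (A : 'M[C]_n) : psdmx A^T -> psdmx A.
Proof.
move=> /psdP At_ge0; apply/psdP => x; have := At_ge0 (map_mx Num.conj x).
rewrite /mxform; have -> : adjmx (map_mx Num.conj x) = x^T.
  by apply/matrixP => i j; rewrite !mxE conjCK.
have -> : adjmx x *m A *m x = (x^T *m A^T *m map_mx Num.conj x)^T.
  by rewrite !trmx_mul !trmxK mulmxA.
by rewrite [in X in _ -> X]mxE.
Qed.

Lemma psdmx_antisym n (A B : 'M[C]_n) : psdmx (A - B) -> psdmx (B - A) -> A = B.
Proof.
move=> /psdP AB_ge0 /psdP BA_ge0; apply/eqP; rewrite -subr_eq0; apply/eqP.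
apply: mxform_eq0 => x; apply/eqP; rewrite eq_le AB_ge0 andbT.
by have := BA_ge0 x; rewrite -opprB mxform_opp oppr_le0.
Qed.

Lemma gram_eq0 m n (S : 'M[C]_(m, n)) : adjmx S *m S = 0 -> S = 0.
Proof.
move=> /matrixP SS0; apply/matrixP => i j; rewrite mxE.
move/eqP: (SS0 j j); rewrite !mxE psumr_eq0 => [|k _]; last first.
  by rewrite !mxE mulrC mul_conjC_ge0.
move/allP/(_ i (mem_index_enum _)); rewrite !mxE mulrC mul_conjC_eq0.
by move/implyP/(_ isT)/eqP.
Qed.

Lemma psdmx_scale_ge0 n (A : 'M[C]_n) c :
  psdmx A -> A != 0 -> psdmx (c *: A) -> 0 <= c.
Proof.
move=> /psdP A_ge0 A_neq0 /psdP cA_ge0.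
have [x Ax_neq0] : exists x, mxform A x x != 0.
  apply: NNPP => Ax0; move/eqP: A_neq0; apply; apply: mxform_eq0 => x.
  by apply/eqP/negPn/negP => Ax_neq0; apply: Ax0; exists x.
by have := cA_ge0 x; rewrite mxform_scale pmulr_lge0 // lt_def Ax_neq0 A_ge0.
Qed.

Lemma psdmx_pencil_eq0 n (K L : 'M[C]_n) : psdmx L ->
  (forall t : C, psdmx (t *: K + t^* *: adjmx K + (t^* * t) *: L)) -> K = 0.
Proof.
move=> /psdP L_ge0 pencil_ge0; apply: mxform_eq0 => w.
set a := mxform K w w; set g := mxform L w w.
have g_ge0 : 0 <= g := L_ge0 w.
pose s := (1 + g)^-1.
have s_gt0 : 0 < s by rewrite invr_gt0 ltr_wpDr.
have sg_le1 : s * g <= 1 by rewrite mulrC ler_pdivrMr ?mul1r ?lerDr ?ltr_wpDr.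
have := (psdP _).1 (pencil_ge0 (- (s * a^*))) w.
rewrite !mxform_add !mxform_scale mxform_adj -/a -/g rmorphN rmorphM /= conjCK.
have s_conj : s^* = s by rewrite geC0_conj // ltW.
rewrite s_conj.
(* at [t = - s a^*] the form is [s |a|^2 (s g - 2)], negative unless [a = 0] *)
have -> : - (s * a^*) * a + - (s * a) * a^* + - (s * a) * - (s * a^*) * g
   = s * (a * a^*) * (s * g - 2%:R) by ring.
have sg2_lt0 : s * g - 2%:R < 0.
  by rewrite subr_lt0 (le_lt_trans sg_le1) // ltr1n.
rewrite nmulr_lge0 // => saa_le0.
have : s * (a * a^*) = 0.
  by apply/eqP; rewrite eq_le saa_le0 mulr_ge0 ?mul_conjC_ge0 // ltW.
by move/eqP; rewrite mulf_eq0 (gt_eqF s_gt0) mul_conjC_eq0 => /eqP.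
Qed.

End Psd.

Section GramFactor.
Variable C : numClosedFieldType.

Lemma psdmx_spectral n (A : 'M[C]_n) : psdmx A ->
  A = adjmx (spectralmx A) *m diag_mx (spectral_diag A) *m spectralmx A.
Proof.
move=> [A_adj _]; have P_unitary := spectral_unitarymx A.
have A_normal : A \is normalmx by apply/normalmxP; rewrite map_conj_trmx A_adj.
by rewrite -map_conj_trmx -invmx_unitary //; apply/orthomx_spectralP.
Qed.

Lemma spectral_diag_ge0 n (A : 'M[C]_n) i : psdmx A -> 0 <= spectral_diag A 0 i.
Proof.
move=> A_psd; set P := spectralmx A.
have PP : P *m adjmx P = 1%:M.
  by rewrite -map_conj_trmx; apply/unitarymxP/spectral_unitarymx.
have : psdmx (P *m A *m adjmx P).
  by rewrite -{1}[P]adjmxK; apply: psdmx_congr.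
rewrite [A in P *m A](psdmx_spectral A_psd) -/P !mulmxA PP mul1mx -mulmxA PP mulmx1.
by move/psdP/(_ (delta_mx i 0)); rewrite mxform_delta mxE eqxx.
Qed.

(* Not the positive square root of [A], but a factor [S] with [A = S^* S]. *)
Definition gram_factor n (A : 'M[C]_n) : 'M[C]_n :=
  diag_mx (\row_i sqrtC (spectral_diag A 0 i)) *m spectralmx A.

Lemma gram_factorE n (A : 'M[C]_n) :
  psdmx A -> A = adjmx (gram_factor A) *m gram_factor A.
Proof.
move=> A_psd; rewrite /gram_factor adjmxM adjmx_diag -mulmxA (mulmxA (diag_mx _)).
rewrite mulmx_diag {1}(psdmx_spectral A_psd) mulmxA.
congr (_ *m diag_mx _ *m _); apply/rowP => j.
by rewrite !mxE geC0_conj ?sqrtC_ge0 ?spectral_diag_ge0 // -expr2 sqrtCK.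
Qed.

Definition rank1_decomp n (A : 'M[C]_n) : seq 'cV[C]_n :=
  [seq adjmx (row t (gram_factor A)) | t <- enum 'I_n].

Lemma rank1_decompE n (A : 'M[C]_n) :
  psdmx A -> A = \sum_(v <- rank1_decomp A) v *m adjmx v.
Proof.
move=> A_psd; rewrite {1}(gram_factorE A_psd) /rank1_decomp big_map big_enum /=.
apply/matrixP => i j; rewrite summxE !mxE; apply: eq_bigr => t _.
by rewrite adjmxK !mxE big_ord1 !mxE.
Qed.

End GramFactor.

Section PositiveFunctional.
Variables (C : numClosedFieldType) (n : nat).
Implicit Types f : 'M[C]_n -> C.

Definition functional_mx f : 'M[C]_n := \matrix_(i, j) f (delta_mx j i).

Lemma scalar_mxtraceE f : scalar f -> forall X, f X = \tr (functional_mx f *m X).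
Proof.
move=> f_lin X.
pose F : {scalar 'M[C]_n} := HB.pack f (GRing.isLinear.Build _ _ _ _ f f_lin).
rewrite -[f X]/(F X) {1}(matrix_sum_delta X) linear_sum.
under eq_bigr do rewrite linear_sum; rewrite exchange_big.
apply: eq_bigr => j _; rewrite mxE; apply: eq_bigr => i _.
by rewrite linearZ !mxE mulrC.
Qed.

Lemma functional_mx_psd f : scalar f -> (forall X, psdmx X -> 0 <= f X) ->
  psdmx (functional_mx f).
Proof.
move=> f_lin f_ge0; apply/psdP => w.
have <- : \tr (functional_mx f *m (w *m adjmx w)) = mxform (functional_mx f) w w.
  by rewrite mulmxA mxtrace_mulC mulmxA trace_mx11.
by rewrite -scalar_mxtraceE // f_ge0 // -{1}[w]adjmxK; apply: psdmx_gram.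
Qed.

Lemma positive_functionalE f : scalar f -> (forall X, psdmx X -> 0 <= f X) ->
  forall X, f X = \sum_(w <- rank1_decomp (functional_mx f)) (adjmx w *m X *m w) 0 0.
Proof.
move=> f_lin f_ge0 X; rewrite scalar_mxtraceE //.
rewrite {1}(rank1_decompE (functional_mx_psd f_lin f_ge0)) mulmx_suml raddf_sum /=.
by apply: eq_bigr => w _; rewrite -mulmxA mxtrace_mulC trace_mx11.
Qed.

End PositiveFunctional.

Lemma entanglement_breaking_holevo (C : numClosedFieldType) p q (I : eqType) (r : seq I)
    (f : I -> 'M[C]_p -> C) (E : I -> 'M[C]_q) (phi : 'M[C]_p -> 'M[C]_q) :
    {in r, forall i, scalar (f i)} -> {in r, forall i X, psdmx X -> 0 <= f i X} ->
    {in r, forall i, psdmx (E i)} -> (forall X, phi X = \sum_(i <- r) f i X *: E i) ->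
  entanglement_breaking phi.
Proof.
move=> f_lin f_ge0 E_psd phiE.
exists (flatten [seq [seq (v, w) | v <- rank1_decomp (E i),
                                  w <- rank1_decomp (functional_mx (f i))] | i <- r]).
move=> X; rewrite phiE big_flatten big_map; apply: eq_big_seq => i ri.
rewrite big_allpairs {1}(positive_functionalE (f_lin i ri) (f_ge0 i ri) X).
rewrite {1}(rank1_decompE (E_psd i ri)) scaler_sumr; apply: eq_bigr => v _.
rewrite scaler_suml; apply: eq_bigr => w _ /=.
have -> : v *m adjmx w *m X *m w *m adjmx v = v *m (adjmx w *m X *m w) *m adjmx v.
  by rewrite !mulmxA.
by rewrite {2}[adjmx w *m X *m w]mx11_scalar mul_mx_scalar -scalemxAl.
Qed.

Section KadisonSchwarz.
Variable C : numClosedFieldType.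

Lemma psdmx_block_gram k n (Z : 'I_k -> 'M[C]_n) :
  psdmx (blockmx (fun i j => adjmx (Z i) *m Z j)).
Proof. by rewrite /blockmx -mul_mxcol_mxrow -adjmx_mxrow; apply: psdmx_gram. Qed.

Lemma psdmx_block_adj k n (Y : 'I_k -> 'I_k -> 'M[C]_n) :
  psdmx (blockmx Y) -> forall i j, Y j i = adjmx (Y i j).
Proof.
case=> Y_adj _ i j; have := congr1 (fun M => submxblock M j i) Y_adj.
by rewrite adjmx_blockmx /blockmx !mxblockK.
Qed.

Lemma psdmx_block_ge0 k n (Y : 'I_k -> 'I_k -> 'M[C]_n) :
  psdmx (blockmx Y) -> forall v : 'I_k -> 'cV[C]_n,
  0 <= (\sum_j \sum_i adjmx (v i) *m Y i j *m v j) 0 0.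
Proof.
case=> _ Y_ge0 v; have := Y_ge0 (\mxcol_j v j).
rewrite adjmx_mxcol /blockmx mul_mxrow_mxblock mul_mxrow_mxcol.
by under eq_bigr do rewrite mulmx_suml.
Qed.

Variables (n m : nat) (psi : 'M[C]_n -> 'M[C]_m).
Hypotheses (psi1 : psi 1%:M = 1%:M) (psi_cp : completely_positive psi).

Let one_pair (X : 'M[C]_n) : 'I_2 -> 'M[C]_n :=
  fun i => if val i == 0%N then 1%:M else X.

Let psi_pair_psd X :
  psdmx (blockmx (fun i j => psi (adjmx (one_pair X i) *m one_pair X j))).
Proof. exact/psi_cp/psdmx_block_gram. Qed.

Lemma cp_adjmx X : psi (adjmx X) = adjmx (psi X).
Proof.
have := psdmx_block_adj (psi_pair_psd X) ord0 (lift ord0 ord0).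
by rewrite /one_pair /= adjmx1 mulmx1 mul1mx.
Qed.

Lemma kadison_schwarz X : psdmx (psi (adjmx X *m X) - adjmx (psi X) *m psi X).
Proof.
apply/psdP => w.
pose v : 'I_2 -> 'cV[C]_m := fun i => if val i == 0%N then - (psi X *m w) else w.
have := psdmx_block_ge0 (psi_pair_psd X) v.
rewrite !big_ord_recl !big_ord0 !addr0 /v /one_pair /= adjmx1 !mulmx1 !mul1mx psi1.
rewrite cp_adjmx /mxform adjmxN adjmxM !mulNmx !mulmxN !opprK !mulmx1.
by rewrite mulmxBr mulmxBl !mulmxA subrr add0r addrC.
Qed.

End KadisonSchwarz.

Lemma sqr_reduced_nilpotent_eq0 (R : pzRingType) (a : R) :
  (forall k, (0 < k)%N -> a ^+ k.*2 = 0 -> a ^+ k = 0) ->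
  forall m, a ^+ m = 0 -> a = 0.
Proof.
move=> sqr_reduced m; elim/ltn_ind: m => -[|[|m]] IH am0.
- by rewrite -[a]mulr1 -(expr0 a) am0 mulr0.
- by rewrite -(expr1 a).
- have m_le : (m.+2 <= (uphalf m.+2).*2)%N by rewrite uphalfE; lia.
  apply: (IH (uphalf m.+2)); first by rewrite uphalfE; lia.
  by apply: sqr_reduced => //; rewrite -(subnKC m_le) exprD am0 mul0r.
Qed.

Lemma reduced_diagonalizable (F : closedFieldType) n (A : 'M[F]_n.+1)
    (S : 'M[F]_n.+1 -> Prop) :
  S A -> S 0 -> (forall M M', S M -> S M' -> S (M + M')) ->
  (forall c M, S M -> S (c *: M)) -> (forall M, S M -> S (M *m A)) ->
  (forall M k, S M -> M ^+ k = 0 -> M = 0) -> diagonalizable A.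
Proof.
move=> SA S0 SD SZ SM S_reduced.
have [s charA] := closed_field_poly_normal (char_poly A).
rewrite (monicP (char_poly_monic A)) scale1r in charA.
set rs := [seq r <- undup s | r != 0].
apply/diagonalizableP; exists (0 :: rs).
  by rewrite /= mem_filter eqxx /= filter_uniq // undup_uniq.
rewrite big_cons subr0; set q := \prod_(r <- rs) ('X - r%:P).
apply/mxminpoly_minP; rewrite rmorphM /= horner_mx_X.
have S_Ap p : S (A * horner_mx A p).
  elim/poly_ind: p => [|p c IH]; first by rewrite rmorph0 mulr0.
  rewrite rmorphD rmorphM /= horner_mx_X horner_mx_C mulrDr mulrA.
  by rewrite -scalemx1 -mulmxE -scalemxAr mulmx1; apply: SD; [apply: SM | apply: SZ].
apply: (S_reduced _ (size s) (S_Ap q)).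
(* [A q(A)] lies in [S] and is nilpotent, as [char_poly A] divides [('X q)^(size s)];
   so the squarefree ['X q] annihilates [A]. *)
have root_dvd z : z \in s -> ('X - z%:P) %| 'X * q.
  move=> zs; have [->|z_neq0] := eqVneq z 0; first by rewrite subr0 dvdp_mulIl.
  have zrs : z \in rs by rewrite mem_filter z_neq0 mem_undup.
  by rewrite /q (big_rem z zrs) /= dvdp_mull // dvdp_mulIl.
have : char_poly A %| ('X * q) ^+ size s.
  rewrite charA; have : all (fun z => ('X - z%:P) %| 'X * q) s by apply/allP.
  elim: (s) => [|z s' IH]; first by rewrite big_nil expr0 dvdpp.
  by rewrite big_cons /= exprS => /andP [zq s'q]; apply: dvdp_mul => //; apply: IH.
move/(dvdp_trans (mxminpoly_dvd_char A))/mxminpoly_minP.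
by rewrite rmorphXn rmorphM /= horner_mx_X.
Qed.

Lemma mxvec_mul_ext (R : pzRingType) m n p (M M' : 'M[R]_(m * n, p)) :
  (forall Y, mxvec Y *m M = mxvec Y *m M') -> M = M'.
Proof.
move=> eqM; apply/row_matrixP => i; rewrite !rowE.
by have := eqM (vec_mx (delta_mx 0 i)); rewrite vec_mxK.
Qed.

Lemma similar_diag_delta_comm (F : fieldType) n (P M : 'M[F]_n) s :
  P \in unitmx -> similar_diag P M ->
  let E := invmx P *m delta_mx s s *m P in E *m M = M *m E.
Proof.
move=> P_unit /(similar_diagLR P_unit) [d ->]; rewrite conjVmx //=.
have -> : delta_mx s s = diag_mx (delta_mx 0 s) :> 'M[F]_n.
  apply/matrixP => i j; rewrite !mxE eqxx /=.
  case: (eqVneq i j) => [->|ij]; rewrite ?andbb ?mulr1n // mulr0n.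
  by case: (i =P s) ij => // ->; case: (j =P s) => // ->; rewrite eqxx.
rewrite !mulmxA -!(mulmxA _ P (invmx P)) mulmxV // !mulmx1; congr (_ *m _).
by rewrite -!mulmxA; congr (_ *m _); apply: diag_mx_comm.
Qed.

Section IdempotentCP.
Variables (C : numClosedFieldType) (n' : nat).
Local Notation n := n'.+1.
Variable phi : {linear 'M[C]_n -> 'M[C]_n}.
Hypotheses (phi1 : phi 1%:M = 1%:M) (phi_cp : completely_positive phi).
Hypothesis phiK : forall X, phi (phi X) = phi X.

Local Notation phi_adjmx := (cp_adjmx phi_cp).
Local Notation phi_schwarz := (kadison_schwarz phi1 phi_cp).

Lemma phi_psd A : psdmx A -> psdmx (phi A).
Proof.
move=> /gram_factorE ->; set S := gram_factor A.
rewrite -[phi _](subrK (adjmx (phi S) *m phi S)).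
exact: psdmxD (phi_schwarz S) (psdmx_gram _).
Qed.

Lemma phi_adjmx_fixed x : phi x = x -> phi (adjmx x) = adjmx x.
Proof. by move=> phix; rewrite phi_adjmx phix. Qed.

Lemma phi_faithful x : phi x = x -> phi (adjmx x *m x) = 0 -> x = 0.
Proof.
move=> phix phixx0; apply: gram_eq0; apply: psdmx_antisym.
  by rewrite subr0; apply: psdmx_gram.
by have := phi_schwarz x; rewrite phixx0 phix sub0r.
Qed.

Lemma phi_mul_ker a c : phi a = a -> phi c = 0 -> phi (a *m c) = 0.
Proof.
move=> phia phic; apply: (@psdmx_pencil_eq0 _ _ _ (phi (adjmx c *m c))).
  exact/phi_psd/psdmx_gram.
(* Schwarz at [Z := a^* + t c], which [phi] maps to [a^*] *)
move=> t; set Z := adjmx a + t *: c.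
have phiZ : phi Z = adjmx a.
  by rewrite linearD linearZ /= phi_adjmx_fixed // phic scaler0 addr0.
have := phi_psd (phi_schwarz Z); rewrite phiZ adjmxK linearB.
have -> : adjmx Z *m Z = a *m adjmx a + (t *: (a *m c) + t^* *: adjmx (a *m c)
     + (t^* * t) *: (adjmx c *m c)).
  rewrite /Z adjmxD adjmxZ adjmxK !mulmxDl !mulmxDr adjmxM.
  rewrite -!scalemxAl -!scalemxAr scalerA !addrA.
  by congr (_ + _); rewrite -!addrA; congr (_ + _); apply: addrC.
by rewrite !linearD !linearZ /= !phiK phi_adjmx addrAC subrr add0r.
Qed.

Lemma phi_mul_phir a b : phi a = a -> phi (a *m b) = phi (a *m phi b).
Proof.
move=> phia; have := phi_mul_ker (c := b - phi b) phia.
rewrite linearB phiK subrr mulmxBr linearB => /(_ erefl)/eqP.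
by rewrite subr_eq0 => /eqP.
Qed.

Lemma phi_mul_phil a b : phi a = a -> phi (b *m a) = phi (phi b *m a).
Proof.
move=> phia; apply: (can_inj (@adjmxK _ _ _)).
by rewrite -!phi_adjmx !adjmxM (phi_mul_phir _ (phi_adjmx_fixed phia)) phi_adjmx.
Qed.

(* [lmul x] acts on [mxvec Y] as [Y |-> x o phi Y], where [x o y := phi (x *m y)]
   is the Choi-Effros product, which makes the range of [phi] an algebra. *)
Definition lmul x : 'M[C]_(n * n) := lin_mx (phi \o mulmx x \o phi).

Lemma lmulE x Y : mxvec Y *m lmul x = mxvec (phi (x *m phi Y)).
Proof. exact: mul_vec_lin. Qed.

Lemma lmul_is_linear : linear lmul.
Proof.
move=> c x y; apply: mxvec_mul_ext => Y.
by rewrite mulmxDr -scalemxAr !lmulE mulmxDl -scalemxAl !linearP.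
Qed.

HB.instance Definition _ := GRing.isLinear.Build C 'M[C]_n 'M[C]_(n * n) _ lmul
  lmul_is_linear.

Lemma lmulM x z : phi x = x -> phi z = z -> lmul x *m lmul z = lmul (phi (z *m x)).
Proof.
move=> phix phiz; apply: mxvec_mul_ext => Y; rewrite mulmxA !lmulE phiK.
by rewrite -phi_mul_phir // mulmxA -phi_mul_phil // phiK.
Qed.

Lemma mxvec_lmul1 Y : mxvec Y *m lmul 1%:M = mxvec (phi Y).
Proof. by rewrite lmulE mul1mx phiK. Qed.

Lemma lmul_mxvec1 x : phi x = x -> mxvec 1%:M *m lmul x = mxvec x.
Proof. by move=> phix; rewrite lmulE phi1 mulmx1 phix. Qed.

Lemma lmul_eq0 x : phi x = x -> lmul x = 0 -> x = 0.
Proof.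
move=> phix lx0; have := lmul_mxvec1 phix; rewrite lx0 mulmx0 => /esym.
by rewrite -(linear0 (@mxvec C n n)) => /(can_inj (@mxvecK _ _ _)).
Qed.

Lemma minimal_idem_adj f : phi f = f -> phi (f *m f) = f ->
  (forall z, phi z = z -> exists c, phi (f *m z) = c *: f) -> adjmx f = f.
Proof.
move=> phif phiff f_min; have [->|f_neq0] := eqVneq f 0; first exact: adjmx0.
have [c ffc] := f_min _ (phi_adjmx_fixed phif).
have ffc_adj : adjmx (c *: f) = c *: f by rewrite -ffc -phi_adjmx adjmxM adjmxK.
have c_neq0 : c != 0.
  apply: contra f_neq0 => /eqP c0.
  have : phi (adjmx (adjmx f) *m adjmx f) = 0 by rewrite adjmxK ffc c0 scale0r.
  move/(phi_faithful (phi_adjmx_fixed phif))/(congr1 adjmx).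
  by rewrite adjmxK adjmx0 => ->.
(* [f^* = u f] with [u := c / c^*], and [f^* = (f o f)^* = u^2 f] forces [u = 1] *)
set u := c / c^*; have fu : adjmx f = u *: f.
  rewrite /u mulrC -scalerA -ffc_adj adjmxZ scalerA mulVf ?scale1r //.
  by rewrite conjC_eq0.
have : adjmx f = (u * u) *: f.
  rewrite -{1}phiff -phi_adjmx adjmxM fu -scalemxAl -scalemxAr !linearZ /=.
  by rewrite phiff scalerA.
rewrite {1}fu => /eqP; rewrite -subr_eq0 -scalerBl scaler_eq0 (negbTE f_neq0) orbF.
rewrite -{1}(mulr1 u) -mulrBr mulf_eq0 subr_eq0 mulf_eq0 invr_eq0 conjC_eq0.
by rewrite (negbTE c_neq0) /= => /eqP u1; rewrite fu -u1 scale1r.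
Qed.

Section PPT.
Hypothesis phiT_cp : completely_positive (fun X => (phi X)^T).

Lemma phi_schwarz_tr X : psdmx (phi (adjmx X *m X) - phi X *m adjmx (phi X)).
Proof.
have phiT1 : (phi 1%:M)^T = 1%:M by rewrite phi1 trmx1.
have /= := kadison_schwarz phiT1 phiT_cp X.
by rewrite adjmx_trmx -trmx_mul -linearB; apply: psdmx_trmx.
Qed.

Lemma phi_gramC x : phi x = x -> phi (adjmx x *m x) = phi (x *m adjmx x).
Proof.
move=> phix; apply: psdmx_antisym.
  by have := phi_psd (phi_schwarz_tr x); rewrite linearB phiK phix.
have := phi_psd (phi_schwarz_tr (adjmx x)).
by rewrite linearB phiK phi_adjmx_fixed // adjmxK.
Qed.

Definition phi_commutator p q := phi (adjmx p *m q) - phi (q *m adjmx p).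

Lemma phi_commutatorDl p p' q c :
  phi_commutator (p + c *: p') q = phi_commutator p q + c^* *: phi_commutator p' q.
Proof.
rewrite /phi_commutator adjmxD adjmxZ mulmxDl mulmxDr -scalemxAl -scalemxAr.
by rewrite !linearD !linearZ /= addrACA.
Qed.

Lemma phi_commutatorDr p q q' c :
  phi_commutator p (q + c *: q') = phi_commutator p q + c *: phi_commutator p q'.
Proof.
rewrite /phi_commutator mulmxDl mulmxDr -scalemxAl -scalemxAr.
by rewrite !linearD !linearZ /= addrACA.
Qed.

Lemma phi_mulC x y : phi x = x -> phi y = y -> phi (x *m y) = phi (y *m x).
Proof.
(* polarize [phi_gramC] at [x^* + c y] *)
move=> phix phiy; set u := adjmx x; have phiu : phi u = u := phi_adjmx_fixed phix.
have comm0 z : phi z = z -> phi_commutator z z = 0.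
  by move=> phiz; rewrite /phi_commutator phi_gramC // subrr.
apply/eqP; rewrite -subr_eq0 -[x]adjmxK -/u; apply/eqP.
apply: (conj_comb_eq0 (b := phi_commutator y u)) => c.
have phi_ucy : phi (u + c *: y) = u + c *: y by rewrite linearD linearZ /= phiu phiy.
have := comm0 _ phi_ucy.
by rewrite phi_commutatorDl !phi_commutatorDr !comm0 // add0r scaler0 addr0.
Qed.

Lemma lmulC x z : phi x = x -> phi z = z -> lmul x *m lmul z = lmul z *m lmul x.
Proof. by move=> phix phiz; rewrite !lmulM // phi_mulC. Qed.

Lemma lmulX x m : phi x = x -> exists2 y, phi y = y &
  lmul x ^+ m.+1 = lmul y /\ (adjmx x = x -> adjmx y = y).
Proof.
move=> phix; elim: m => [|m [y phiy [xmy yadj]]]; first by exists x.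
exists (phi (x *m y)); first exact: phiK.
split; first by rewrite exprSr xmy -mulmxE lmulM.
by move=> xadj; rewrite -phi_adjmx adjmxM xadj yadj // phi_mulC.
Qed.

Lemma lmul_herm_sqr_reduced h : phi h = h -> adjmx h = h ->
  forall k, (0 < k)%N -> lmul h ^+ k.*2 = 0 -> lmul h ^+ k = 0.
Proof.
move=> phih hadj k k_gt0; have [g phig [hkg gadj]] := lmulX k.-1 phih.
rewrite prednK // in hkg; rewrite -muln2 exprM hkg expr2 -mulmxE lmulM //.
move/(lmul_eq0 (phiK _)); rewrite -{1}(gadj hadj) => /(phi_faithful phig) ->.
exact: linear0.
Qed.

Lemma lmul_nilpotent_eq0 x m : phi x = x -> lmul x ^+ m = 0 -> lmul x = 0.
Proof.
move=> phix xm0; set h := phi (adjmx x *m x).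
have phih : phi h = h := phiK _.
have hadj : adjmx h = h by rewrite -phi_adjmx adjmxM adjmxK.
have lmul_h : lmul h = lmul x * lmul (adjmx x).
  by rewrite -mulmxE lmulM ?phi_adjmx_fixed.
have : lmul h ^+ m = 0.
  rewrite lmul_h exprMn_comm ?xm0 ?mul0r // /GRing.comm -!mulmxE.
  by rewrite lmulC ?phi_adjmx_fixed.
move/(sqr_reduced_nilpotent_eq0 (lmul_herm_sqr_reduced phih hadj))/(lmul_eq0 phih).
by move/(phi_faithful phix) ->; apply: linear0.
Qed.

Definition range_basis (i : 'I_(n * n)) := phi (vec_mx (delta_mx 0 i)).

Lemma lmul_range_basis x : phi x = x ->
  lmul x = \sum_(i < n * n) mxvec x 0 i *: lmul (range_basis i).
Proof.
move=> phix; rewrite -{1}phix -{1}(mxvecK x) {1}(row_sum_delta (mxvec x)).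
by rewrite !linear_sum; apply: eq_bigr => i _; rewrite !linearZ.
Qed.

Lemma lmul_codiagonalizable :
  codiagonalizable [seq lmul (range_basis i) | i <- enum 'I_(n * n)].
Proof.
apply/codiagonalizableP; split.
  by move=> _ _ /mapP [i _ ->] /mapP [j _ ->]; apply: lmulC; apply: phiK.
move=> _ /mapP [i _ ->].
apply: (@reduced_diagonalizable _ _ _ (fun M => exists2 y, phi y = y & M = lmul y)).
- by exists (range_basis i) => //; apply: phiK.
- by exists 0; rewrite !linear0.
- by move=> _ _ [y phiy ->] [z phiz ->]; exists (y + z); rewrite !linearD ?phiy ?phiz.
- by move=> c _ [y phiy ->]; exists (c *: y); rewrite !linearZ /= ?phiy.
- move=> _ [y phiy ->]; exists (phi (range_basis i *m y)); first exact: phiK.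
  by rewrite lmulM //; apply: phiK.
- by move=> _ k [y phiy ->]; apply: lmul_nilpotent_eq0.
Qed.

Section Eigenbasis.
Variable P : 'M[C]_(n * n).
Hypothesis P_unit : P \in unitmx.
Hypothesis P_diag :
  all [pred A | similar_diag P A] [seq lmul (range_basis i) | i <- enum 'I_(n * n)].

Definition eigenproj s := invmx P *m delta_mx s s *m P.

Lemma mulmx_eigenproj u s : u *m eigenproj s = (u *m invmx P) 0 s *: row s P.
Proof.
rewrite /eigenproj !mulmxA -(mul_delta_mx (0 : 'I_1)) mulmxA -colE.
by rewrite [col s _]mx11_scalar mul_scalar_mx -scalemxAl -rowE mxE.
Qed.

Lemma eigenproj_sum : \sum_s eigenproj s = 1%:M.
Proof.
by rewrite /eigenproj -mulmx_suml -mulmx_sumr -mx1_sum_delta mulmx1 mulVmx.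
Qed.

Lemma eigenproj_idem s : eigenproj s *m eigenproj s = eigenproj s.
Proof.
rewrite /eigenproj !mulmxA -(mulmxA _ P (invmx P)) mulmxV // mulmx1.
by rewrite -(mulmxA (invmx P)) mul_delta_mx.
Qed.

Lemma eigenproj_lmulC x s : phi x = x -> eigenproj s *m lmul x = lmul x *m eigenproj s.
Proof.
move=> phix; rewrite (lmul_range_basis phix) mulmx_sumr mulmx_suml.
apply: eq_bigr => i _; rewrite -scalemxAr -scalemxAl; congr (_ *: _).
apply: similar_diag_delta_comm => //; apply: (allP P_diag).
by apply/mapP; exists i; rewrite ?mem_enum.
Qed.

(* The rows of [P] are common eigenvectors of the [lmul x]; [idem s] is the
   component of [1] along row [s], and [character s z] is the eigenvalue of
   [lmul z] there, or [0] (division by [0]) when [idem s = 0]. *)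
Definition idem s : 'M[C]_n := vec_mx (mxvec 1%:M *m eigenproj s).
Definition coord s z := (mxvec z *m invmx P) 0 s.
Definition character s z := coord s z / coord s 1%:M.

Lemma idem_fixed s : phi (idem s) = idem s.
Proof.
apply: (can_inj (@mxvecK _ _ _)); rewrite -mxvec_lmul1 /idem vec_mxK -mulmxA.
by rewrite eigenproj_lmulC ?phi1 // mulmxA mxvec_lmul1 phi1.
Qed.

Lemma phi_idem_mul s z :
  phi z = z -> phi (idem s *m z) = vec_mx (mxvec z *m eigenproj s).
Proof.
move=> phiz; rewrite phi_mulC ?idem_fixed // -{1}idem_fixed -[LHS]mxvecK -lmulE.
by rewrite /idem vec_mxK -mulmxA eigenproj_lmulC // mulmxA lmul_mxvec1.
Qed.

Lemma idem_sum : \sum_s idem s = 1%:M.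
Proof. by rewrite /idem -linear_sum -mulmx_sumr eigenproj_sum mulmx1 /= mxvecK. Qed.

Lemma phi_idem_sqr s : phi (idem s *m idem s) = idem s.
Proof.
by rewrite phi_idem_mul ?idem_fixed // {1}/idem vec_mxK -mulmxA eigenproj_idem.
Qed.

Lemma phi_idem_mul_char s z : phi z = z -> phi (idem s *m z) = character s z *: idem s.
Proof.
move=> phiz; have idemE : idem s = coord s 1%:M *: vec_mx (row s P).
  by rewrite /idem mulmx_eigenproj linearZ.
have [coord0|coord_neq0] := eqVneq (coord s 1%:M) 0.
  by rewrite idemE coord0 !scale0r mul0mx linear0 scaler0.
by rewrite phi_idem_mul // mulmx_eigenproj linearZ idemE scalerA /character divfK.
Qed.

Lemma idem_adj s : adjmx (idem s) = idem s.
Proof.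
apply: minimal_idem_adj; [exact: idem_fixed | exact: phi_idem_sqr | move=> z phiz].
by exists (character s z); apply: phi_idem_mul_char.
Qed.

Lemma idem_psd s : psdmx (idem s).
Proof.
rewrite -phi_idem_sqr -{1}idem_adj; apply: phi_psd; exact: psdmx_gram.
Qed.

Lemma phi_idem_decomp X : phi X = \sum_s character s (phi X) *: idem s.
Proof.
rewrite -{1}phiK -{1}[phi X]mul1mx -idem_sum mulmx_suml linear_sum.
by apply: eq_bigr => s _; rewrite phi_idem_mul_char ?phiK.
Qed.

Lemma character_scalar s : scalar (fun X => character s (phi X)).
Proof.
move=> a X Y; rewrite /character /coord !linearP /= mulmxDl -scalemxAl !mxE.
by rewrite mulrDl mulrA.
Qed.

Lemma character_ge0 s X : idem s != 0 -> psdmx X -> 0 <= character s (phi X).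
Proof.
move=> idem_neq0 X_psd; apply: (psdmx_scale_ge0 (idem_psd s) idem_neq0).
have phi_Xe : phi (X *m idem s) = character s (phi X) *: idem s.
  rewrite phi_mul_phil ?idem_fixed // phi_mulC ?phiK ?idem_fixed //.
  by rewrite phi_idem_mul_char ?phiK.
have <- : phi (idem s *m X *m idem s) = character s (phi X) *: idem s.
  rewrite -mulmxA phi_mul_phir ?idem_fixed // phi_Xe -scalemxAr linearZ /=.
  by rewrite phi_idem_sqr.
by apply: phi_psd; rewrite -{1}idem_adj; apply: psdmx_congr.
Qed.

End Eigenbasis.

Lemma idempotent_PPT_entanglement_breaking : entanglement_breaking phi.
Proof.
have [P P_unit P_diag] := lmul_codiagonalizable.
apply: (@entanglement_breaking_holevo _ _ _ _ [seq s <- enum 'I_(n * n) | idem P s != 0]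
  (fun s X => character P s (phi X)) (idem P)).
- by move=> s _; apply: character_scalar.
- move=> s; rewrite mem_filter => /andP [idem_neq0 _] X.
  exact: (character_ge0 P_unit P_diag).
- by move=> s _; apply: (idem_psd P_unit P_diag).
- move=> X; rewrite {1}(phi_idem_decomp P_unit P_diag) big_filter [RHS]big_mkcond.
  rewrite big_enum /=.
  by apply: eq_bigr => s _; have [->|] := eqVneq (idem P s) 0; rewrite ?scaler0.
Qed.

End PPT.

End IdempotentCP.

Theorem mainTheorem5 (R : realType) (n : nat) (phi : {linear 'M[R[i]]_n -> 'M[R[i]]_n}) :
  phi 1%:M = 1%:M ->
  PPT phi ->
  (forall X, phi (phi X) = phi X) ->
  entanglement_breaking phi.
Proof.
case: n phi => [|n] phi phi1 [phi_cp phiT_cp] phiK.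
  by exists [::] => X; rewrite big_nil; apply/matrixP => -[].
exact: idempotent_PPT_entanglement_breaking phi1 phi_cp phiK phiT_cp.
Qed.
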